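(* Let $(\mathsf{Proc},\mathsf{Lab},\to,\rightsquigarrow)$ be a combined LTS that admits pre-reversibility. If $\iota_1$ and $\iota_2$ are two independence relations on its transitions such that both resulting LTSIs satisfy SP, BTI and PCI, then the two LTSIs have the same event equivalence $\sim$, the same core independence $\odot$, the same causal ordering $\le$ and the same conflict relation $\#$.
   Context: A combined LTS consists of processes $\mathsf{Proc}$, labels $\mathsf{Lab}$, a forward relation $P\xrightarrow aQ$ and a backward relation $P\rightsquigarrow^aQ$ with $P\xrightarrow aQ$ iff $Q\rightsquigarrow^aP$. A transition is a forward or backward step $t$ with inverse $\bar t$ (the same step in the opposite direction). Transitions are coinitial if they share a source; a path is a finite sequence of transitions each ending where the next starts; a path is rooted if its source cannot perform a backward transition. An LTSI adds an irreflexive symmetric relation $\iota$ on transitions (an independence relation). (SP) if coinitial $t:P\to Q$, $u:P\to R$ with $t\mathrel\iota u$ then there exist $u':Q\to S$ (same label and direction as $u$) and $t':R\to S$ (same label and direction as $t$); (BTI) distinct coinitial backward transitions are independent; (WF) there is no infinite sequence $P_0,P_1,\dots$ with a forward transition $P_{i+1}\to P_i$ for all $i$; (PCI) if $t:P\to Q$, $u:P\to R$, $u':Q\to S$, $t':R\to S$ with $u'$ having the label and direction of $u$, $t'$ those of $t$, and $t\mathrel\iota u$, then $u'\mathrel\iota\bar t$. An LTSI is pre-reversible if it satisfies SP, BTI, WF, PCI; a combined LTS admits pre-reversibility if some independence relation makes it a pre-reversible LTSI. Event equivalence $\sim$ is the smallest equivalence on transitions with $t\sim t'$ whenever $t,u,u',t'$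 form a square as in PCI with $t\mathrel\iota u$; events are $\sim$-classes $[t]$, forward events are classes of forward transitions, $\bar e=[\bar t]$. For a path $r$ and event $e$: $\sharp(\varepsilon,e)=0$, $\sharp(tr,e)=\sharp(r,e)+1$ if $t\in e$, $\sharp(r,e)-1$ if $t\in\bar e$, else $\sharp(r,e)$. Core independence $e\odot e'$: there are coinitial $t\in e$, $t'\in e'$ with $t\mathrel\iota t'$. For forward events: $e\le e'$ iff for all rooted paths $r$, $\sharp(r,e')>0$ implies $\sharp(r,e)>0$; $e\# e'$ iff there is no rooted path $r$ with $\sharp(r,e)>0$ and $\sharp(r,e')>0$. *)

From Stdlib Require Import ZArith Relations ClassicalEpsilon List.
Import ListNotations.
Set Implicit Arguments.
Open Scope Z_scope.

(* A combined LTS is given by its forward relation; the backward relation is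
   its converse:  P ~>^a Q  iff  Q -a-> P. *)
Record LTS := MkLTS {
  Proc : Type;
  Lab : Type;
  fstep : Proc -> Lab -> Proc -> Prop }.

Inductive dir := Fw | Bw.
Definition flip (d : dir) := match d with Fw => Bw | Bw => Fw end.

Section Defs.
Variable L : LTS.

Definition bstep (P : Proc L) (a : Lab L) (Q : Proc L) : Prop := fstep L Q a P.

Definition step (d : dir) P a Q := match d with Fw => fstep L P a Q | Bw => bstep P a Q end.

Record trans := Tr { src : Proc L; lab : Lab L; tgt : Proc L; dr : dir }.

Definition is_trans (t : trans) : Prop := step (dr t) (src t) (lab t) (tgt t).

Definition inv (t : trans) : trans := Tr (tgt t) (lab t) (src t) (flip (dr t)).

Definition coinitial (t u : trans) := src t = src u.

Definition square (t u u' t' : trans) : Prop :=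
  is_trans t /\ is_trans u /\ is_trans u' /\ is_trans t' /\
  src t = src u /\ src u' = tgt t /\ src t' = tgt u /\ tgt u' = tgt t' /\
  lab u' = lab u /\ dr u' = dr u /\ lab t' = lab t /\ dr t' = dr t.

Variable iota : trans -> trans -> Prop.

Definition indep_rel : Prop :=
  (forall t, ~ iota t t) /\ (forall t u, iota t u -> iota u t).

Definition SP : Prop :=
  forall t u, is_trans t -> is_trans u -> coinitial t u -> iota t u ->
    exists u' t', square t u u' t'.

Definition BTI : Prop :=
  forall t u, is_trans t -> is_trans u -> dr t = Bw -> dr u = Bw ->
    coinitial t u -> t <> u -> iota t u.

Definition PCI : Prop :=
  forall t u u' t', square t u u' t' -> iota t u -> iota u' (inv t).

Definition square_rel (t t' : trans) : Prop :=
  exists u u', square t u u' t' /\ iota t u.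

Definition ev_eq : trans -> trans -> Prop := clos_refl_sym_trans trans square_rel.

(* Events are represented by a transition e; t \in [e] iff ev_eq t e. *)
Fixpoint sharp (r : list trans) (e : trans) : Z :=
  match r with
  | nil => 0
  | t :: r' =>
      if excluded_middle_informative (ev_eq t e) then sharp r' e + 1
      else if excluded_middle_informative (ev_eq t (inv e)) then sharp r' e - 1
      else sharp r' e
  end.

Definition core_indep (e e' : trans) : Prop :=
  exists t t', is_trans t /\ is_trans t' /\ ev_eq t e /\ ev_eq t' e' /\
    coinitial t t' /\ iota t t'.

End Defs.

Section Paths.
Variable L : LTS.

Fixpoint path_from (P : Proc L) (r : list (trans L)) : Prop :=
  match r with
  | nil => True
  | t :: r' => is_trans t /\ src t = P /\ path_from (tgt t) r'
  end.

Definition rooted (P : Proc L) : Prop := forall a Q, ~ @bstep L P a Q.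

Definition rooted_path (r : list (trans L)) : Prop :=
  exists P, rooted P /\ path_from P r.

Definition WF : Prop :=
  ~ exists f : nat -> Proc L, forall i, exists a, fstep L (f (S i)) a (f i).

Definition pre_reversible (iota : trans L -> trans L -> Prop) : Prop :=
  indep_rel iota /\ SP iota /\ BTI iota /\ WF /\ PCI iota.

Definition admits_pre_reversibility : Prop := exists iota, pre_reversible iota.

Variable iota : trans L -> trans L -> Prop.

Definition causal_le (e e' : trans L) : Prop :=
  forall r, rooted_path r -> sharp iota r e' > 0 -> sharp iota r e > 0.

Definition conflict (e e' : trans L) : Prop :=
  ~ exists r, rooted_path r /\ sharp iota r e > 0 /\ sharp iota r e' > 0.

End Paths.

(* Given irreflexivity, symmetry, BTI and PCI, independence is determined on
   the sides of every commuting square t, u, u', t': t ι u holds iff the square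
   is nondegenerate, i.e. t ≠ u, u' ≠ t̄ and t' ≠ ū.  Necessity is
   irreflexivity plus PCI.  For sufficiency, PCI applied to the square
   t̄, u', u, t̄' turned at the target of t carries t̄ ι u' back to t ι u.  If t
   and u are backward, BTI applies directly; if only one is forward, turning
   at it leaves two distinct backward transitions; if both are, turning
   leaves the mixed case.  So any two such relations have the same ∼, hence
   the same counts ♯ and the same ≤ and #; since SP completes an independent
   coinitial pair to a square they also have the same ⊙. *)
From Stdlib Require Import Relations ClassicalEpsilon.
Set Implicit Arguments.

Section Squares.
Variable L : LTS.

Lemma inv_involutive (t : trans L) : inv (inv t) = t.
Proof. destruct t as [s a g []]; reflexivity. Qed.

Lemma is_trans_inv (t : trans L) : is_trans t -> is_trans (inv t).
Proof. destruct t as [s a g []]; unfold is_trans, inv; simpl; auto. Qed.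

Lemma dr_inv (t : trans L) : dr (inv t) = flip (dr t).
Proof. reflexivity. Qed.

Lemma inv_inj (t u : trans L) : inv t = inv u -> t = u.
Proof. intro E; rewrite <- (inv_involutive t), E; apply inv_involutive. Qed.

Lemma square_sym (t u u' t' : trans L) : square t u u' t' -> square u t t' u'.
Proof. unfold square; intuition congruence. Qed.

Lemma square_turn (t u u' t' : trans L) :
  square t u u' t' -> square (inv t) u' u (inv t').
Proof.
  destruct t, u, u', t'; unfold square; simpl.
  intros (? & ? & ? & ? & ? & ? & ? & ? & ? & ? & ? & ?); subst.
  repeat split; auto using is_trans_inv.
Qed.

Lemma square_eq (t u u' t' : trans L) : square t u u' t' -> u' = t' -> t = u.
Proof.
  intros Hs <-; destruct t, u, u'; unfold square in Hs; simpl in Hs.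
  destruct Hs as (? & ? & ? & ? & ? & ? & ? & ? & ? & ? & ? & ?); subst.
  reflexivity.
Qed.

Definition nondegenerate (t u u' t' : trans L) : Prop :=
  t <> u /\ u' <> inv t /\ t' <> inv u.

Lemma nondegenerate_sym (t u u' t' : trans L) :
  nondegenerate t u u' t' -> nondegenerate u t t' u'.
Proof. unfold nondegenerate; intuition. Qed.

Lemma nondegenerate_turn (t u u' t' : trans L) : square t u u' t' ->
  nondegenerate t u u' t' -> nondegenerate (inv t) u' u (inv t').
Proof.
  intros Hs (Htu & Hu't & _); repeat split.
  - auto.
  - rewrite inv_involutive; auto.
  - intro E; apply Htu, (square_eq Hs), inv_inj; auto.
Qed.

Variable iota : trans L -> trans L -> Prop.
Hypothesis iota_indep : indep_rel iota.
Hypothesis iota_BTI : BTI iota.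
Hypothesis iota_PCI : PCI iota.

Lemma indep_sym (t u : trans L) : iota t u -> iota u t.
Proof. apply iota_indep. Qed.

Lemma square_indep_nondegenerate (t u u' t' : trans L) :
  square t u u' t' -> iota t u -> nondegenerate t u u' t'.
Proof.
  intros Hs Hi; destruct iota_indep as [Hirr _]; repeat split.
  - intros <-; exact (Hirr _ Hi).
  - intros E; apply (Hirr u'); rewrite E at 2; exact (iota_PCI Hs Hi).
  - intros E; apply (Hirr t'); rewrite E at 2.
    exact (iota_PCI (square_sym Hs) (indep_sym Hi)).
Qed.

Lemma indep_of_turned_square (t u u' t' : trans L) :
  square t u u' t' -> iota (inv t) u' -> iota t u.
Proof.
  intros Hs Hi; apply indep_sym.
  rewrite <- (inv_involutive t); exact (iota_PCI (square_turn Hs) Hi).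
Qed.

Lemma nondegenerate_square_indep_bw (t u u' t' : trans L) : square t u u' t' ->
  nondegenerate t u u' t' -> dr u = Bw -> iota t u.
Proof.
  intros Hs (Htu & Hu't & _) Du.
  pose proof Hs as (Tt & Tu & Tu' & _ & Ctu & Cu't & _ & _ & _ & Du'u & _).
  destruct (dr t) eqn:Dt.
  - apply (indep_of_turned_square Hs), iota_BTI; auto using is_trans_inv.
    + rewrite dr_inv, Dt; reflexivity.
    + congruence.
    + unfold coinitial; simpl; auto.
  - apply iota_BTI; auto.
Qed.

Lemma nondegenerate_square_indep (t u u' t' : trans L) :
  square t u u' t' -> nondegenerate t u u' t' -> iota t u.
Proof.
  intros Hs Hn; destruct (dr u) eqn:Du; [destruct (dr t) eqn:Dt |].
  - apply (indep_of_turned_square Hs), indep_sym.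
    apply (nondegenerate_square_indep_bw (square_sym (square_turn Hs))).
    + exact (nondegenerate_sym (nondegenerate_turn Hs Hn)).
    + rewrite dr_inv, Dt; reflexivity.
  - apply indep_sym, (nondegenerate_square_indep_bw (square_sym Hs));
      auto using nondegenerate_sym.
  - exact (nondegenerate_square_indep_bw Hs Hn Du).
Qed.

Lemma square_indep_iff (t u u' t' : trans L) :
  square t u u' t' -> (iota t u <-> nondegenerate t u u' t').
Proof.
  split; [apply square_indep_nondegenerate | apply nondegenerate_square_indep];
    assumption.
Qed.

End Squares.

Lemma clos_refl_sym_trans_incl (A : Type) (R S : relation A) :
  inclusion A R S ->
  inclusion A (clos_refl_sym_trans A R) (clos_refl_sym_trans A S).
Proof.
  intros HRS x y H; induction H.
  - apply rst_step, HRS; assumption.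
  - apply rst_refl.
  - apply rst_sym; assumption.
  - eapply rst_trans; eassumption.
Qed.

Section Uniqueness.
Variable L : LTS.
Variables iota1 iota2 : trans L -> trans L -> Prop.

Lemma sharp_ext : (forall t e, ev_eq iota1 t e <-> ev_eq iota2 t e) ->
  forall r e, sharp iota1 r e = sharp iota2 r e.
Proof.
  intros Hev r e; induction r as [| t r IH]; simpl; auto.
  destruct (excluded_middle_informative (ev_eq iota1 t e)) as [A | A];
  destruct (excluded_middle_informative (ev_eq iota2 t e)) as [B | B];
  try (exfalso; firstorder fail); rewrite IH; auto.
  destruct (excluded_middle_informative (ev_eq iota1 t (inv e))) as [C | C];
  destruct (excluded_middle_informative (ev_eq iota2 t (inv e))) as [D | D];
  auto; exfalso; firstorder fail.
Qed.

Lemma causal_le_ext : (forall r e, sharp iota1 r e = sharp iota2 r e) ->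
  forall e e', causal_le iota1 e e' <-> causal_le iota2 e e'.
Proof. intros Hs e e'; unfold causal_le; setoid_rewrite Hs; reflexivity. Qed.

Lemma conflict_ext : (forall r e, sharp iota1 r e = sharp iota2 r e) ->
  forall e e', conflict iota1 e e' <-> conflict iota2 e e'.
Proof. intros Hs e e'; unfold conflict; setoid_rewrite Hs; reflexivity. Qed.

Hypothesis indep1 : indep_rel iota1.
Hypothesis PCI1 : PCI iota1.
Hypothesis indep2 : indep_rel iota2.
Hypothesis BTI2 : BTI iota2.
Hypothesis PCI2 : PCI iota2.

Lemma square_indep_transfer (t u u' t' : trans L) :
  square t u u' t' -> iota1 t u -> iota2 t u.
Proof.
  intros Hs Hi; apply (square_indep_iff indep2 BTI2 PCI2 Hs).
  exact (square_indep_nondegenerate indep1 PCI1 Hs Hi).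
Qed.

Lemma ev_eq_transfer (t t' : trans L) : ev_eq iota1 t t' -> ev_eq iota2 t t'.
Proof.
  apply clos_refl_sym_trans_incl.
  intros x y (u & u' & Hs & Hi); exists u, u'.
  split; [| apply (square_indep_transfer Hs)]; assumption.
Qed.

Lemma core_indep_transfer : SP iota1 ->
  forall e e', core_indep iota1 e e' -> core_indep iota2 e e'.
Proof.
  intros SP1 e e' (t & t' & Tt & Tt' & Ete & Ete' & C & Hi).
  destruct (SP1 t t' Tt Tt' C Hi) as (u' & t'' & Hs).
  exists t, t'; repeat split; auto using ev_eq_transfer.
  exact (square_indep_transfer Hs Hi).
Qed.

End Uniqueness.

Theorem proposition5p12 (L : LTS) :
  admits_pre_reversibility L ->
  forall iota1 iota2 : trans L -> trans L -> Prop,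
    indep_rel iota1 -> SP iota1 -> BTI iota1 -> PCI iota1 ->
    indep_rel iota2 -> SP iota2 -> BTI iota2 -> PCI iota2 ->
    (forall t t', is_trans t -> is_trans t' ->
       (ev_eq iota1 t t' <-> ev_eq iota2 t t')) /\
    (forall e e', is_trans e -> is_trans e' ->
       (core_indep iota1 e e' <-> core_indep iota2 e e')) /\
    (forall e e', is_trans e -> is_trans e' -> dr e = Fw -> dr e' = Fw ->
       (causal_le iota1 e e' <-> causal_le iota2 e e')) /\
    (forall e e', is_trans e -> is_trans e' -> dr e = Fw -> dr e' = Fw ->
       (conflict iota1 e e' <-> conflict iota2 e e')).
Proof.
  intros _ iota1 iota2 I1 S1 B1 P1 I2 S2 B2 P2.
  assert (Hev : forall t t', ev_eq iota1 t t' <-> ev_eq iota2 t t')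
    by (split; apply ev_eq_transfer; assumption).
  pose proof (sharp_ext Hev) as Hsharp.
  repeat split; intros.
  - apply Hev; assumption.
  - apply Hev; assumption.
  - apply (core_indep_transfer I1 P1 I2 B2 P2 S1); assumption.
  - apply (core_indep_transfer I2 P2 I1 B1 P1 S2); assumption.
  - apply (causal_le_ext _ _ Hsharp); assumption.
  - apply (causal_le_ext _ _ Hsharp); assumption.
  - apply (conflict_ext _ _ Hsharp); assumption.
  - apply (conflict_ext _ _ Hsharp); assumption.
Qed.
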